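(* Let $p$ be a prime, $f\ge 1$ an integer and $q=p^f$. For $0\le j\le f-1$ fix integers $r_j\ge 0$ such that $r=r_0+r_1p+\cdots+r_{f-1}p^{f-1}>0$ is divisible by $q-1$. For a tuple $(k_0,\dots,k_{f-1})$ of integers write $k=k_0+k_1p+\cdots+k_{f-1}p^{f-1}$. Then for every integer $i\in[0,q-1)$, \[ \sum_{\substack{0\le k_j\le r_j\ (0\le j\le f-1)\\ k\equiv i \bmod (q-1)}} \binom{r_0}{k_0}\binom{r_1}{k_1}\cdots\binom{r_{f-1}}{k_{f-1}} \equiv \begin{cases} (-1)^i \pmod p & \text{if } i\in(0,q-1),\\ 2 \pmod p & \text{if } i=0.\end{cases} \]
   Context: Here the $r_j$ are arbitrary non-negative integers (not necessarily base-$p$ digits; they may exceed $p-1$). *)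

From mathcomp Require Import all_boot all_order all_algebra.
Set Implicit Arguments. Unset Strict Implicit. Unset Printing Implicit Defensive.
Import Order.TTheory GRing.Theory Num.Theory.

Definition pval (p f : nat) (k : 'I_f -> nat) : nat :=
  \sum_(j < f) k j * p ^ j.

(* maximum of the r_j: uniform bound used to range the k_j *)
Definition rmax (f : nat) (r : 'I_f -> nat) : nat := \max_(j < f) r j.

Definition binsum (p f : nat) (r : 'I_f -> nat) (i : nat) : nat :=
  \sum_(k : {ffun 'I_f -> 'I_(rmax r).+1}
         | [forall j, (k j <= r j)%N] &&
           (pval p (fun j => nat_of_ord (k j)) == i %[mod (p ^ f).-1]))
     \prod_(j < f) 'C(r j, k j).

(* Over F_p the Frobenius turns the generating polynomial
   prod_j (X^(p^j) + 1)^(r_j) of the sum into (X + 1)^r, and the sum is the total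
   of its coefficients in degrees congruent to i mod q - 1; this only depends on
   the polynomial modulo X^(q-1) - 1.  There (X + 1)^q = X^q + 1 = X + 1, so
   (X + 1)^r, with r a positive multiple of q - 1, reduces to (X + 1)^(q-1).  Its
   coefficients C(q-1, n) are (-1)^n mod p, and its top degree q - 1 folds onto
   degree 0, which accounts for the value 2 at i = 0. *)

From HB Require Import structures.
From mathcomp Require Import all_boot all_algebra.
From mathcomp Require Import ring zify.
Set Implicit Arguments.
Unset Strict Implicit.
Unset Printing Implicit Defensive.

Import GRing.Theory.
Local Open Scope ring_scope.

Section CoefsMod.
Variables (R : nzRingType) (m i : nat).

Definition coefs_mod (P : {poly R}) : R :=
  \sum_(n < size P | (n %% m == i)%N) P`_n.

Lemma coefs_modE (P : {poly R}) N : (size P <= N)%N ->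
  coefs_mod P = \sum_(n < N | (n %% m == i)%N) P`_n.
Proof.
move=> lePN; rewrite /coefs_mod (big_ord_widen_cond _ (fun n => (n %% m == i)%N)
  (fun n => P`_n) lePN).
rewrite [RHS](bigID (fun n : 'I_N => (n < size P)%N)) /= [X in _ + X]big1 ?addr0 //.
by move=> n /andP[_]; rewrite -leqNgt => /(nth_default 0).
Qed.

Fact coefs_mod_is_nmod_morphism : nmod_morphism coefs_mod.
Proof.
split=> [|P Q]; first by rewrite /coefs_mod size_poly0 big_ord0.
pose N := maxn (size P) (size Q).
rewrite !(@coefs_modE _ N) ?size_polyD ?leq_maxl ?leq_maxr // -big_split /=.
by apply: eq_bigr => n _; rewrite coefD.
Qed.

HB.instance Definition _ :=
  GRing.isNmodMorphism.Build {poly R} R coefs_mod coefs_mod_is_nmod_morphism.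

Lemma coefs_modXn n : coefs_mod 'X^n = (n %% m == i)%N%:R.
Proof.
rewrite (@coefs_modE _ n.+1) ?size_polyXn // big_mkcond big_ord_recr /= coefXn eqxx.
rewrite big1 ?add0r; first by case: (_ == _).
by move=> k _; rewrite coefXn (ltn_eqF (ltn_ord k)) if_same.
Qed.

Lemma coefs_mod_XnM (P : {poly R}) : (0 < m)%N ->
  coefs_mod ('X^m * P) = coefs_mod P.
Proof.
move=> m_gt0; rewrite (@coefs_modE _ (m + size P)); last first.
  by apply: (leq_trans (size_polyMleq _ _)); rewrite size_polyXn; lia.
rewrite big_split_ord /= big1 ?add0r => [|n _]; last by rewrite coefXnM ltn_ord.
by apply: eq_big => [n|n _]; rewrite ?modnDl // coefXnM ltnNge leq_addr addKn.
Qed.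

End CoefsMod.

Lemma eq_coefs_mod_dvdp (F : fieldType) m i (P Q : {poly F}) : (0 < m)%N ->
  ('X^m - 1) %| P - Q -> coefs_mod m i P = coefs_mod m i Q.
Proof.
move=> m_gt0 /divpK PQE; apply/eqP; rewrite -subr_eq0 -raddfB -PQE.
by rewrite mulrBr mulr1 raddfB /= mulrC coefs_mod_XnM // subrr.
Qed.

Lemma coefs_mod_XD1_expn (R : nzRingType) m i : (i < m)%N ->
  coefs_mod m i (('X + 1) ^+ m : {poly R}) = 'C(m, i)%:R + (i == 0)%N%:R.
Proof.
move=> lt_i_m; rewrite exprD1n raddf_sum.
under eq_bigr => n _ do rewrite raddfMn /= coefs_modXn.
rewrite big_ord_recr /= modnn binn (bigD1 (Ordinal lt_i_m)) //= modn_small // eqxx.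
rewrite big1 ?addr0 ?mulr1n 1?eq_sym // => n /negbTE ne_n_i.
by rewrite modn_small // -[val n == i]/(n == Ordinal lt_i_m) ne_n_i mul0rn.
Qed.

Lemma binsum_coefs_mod (R : comNzRingType) p f (r : 'I_f -> nat) i :
  (i < (p ^ f).-1)%N ->
  (binsum p r i)%:R =
    coefs_mod (p ^ f).-1 i (\prod_(j < f) ('X^(p ^ j) + 1) ^+ r j : {poly R}).
Proof.
move=> lt_i_m; have r_lt_rmaxS j : (r j < (rmax r).+1)%N by rewrite ltnS leq_bigmax.
have expandE (j : 'I_f) : ('X^(p ^ j) + 1 : {poly R}) ^+ r j =
    \sum_(k < (rmax r).+1) 'X^(k * p ^ j) *+ 'C(r j, k).
  rewrite exprD1n (big_ord_widen _ (fun k => 'X^(p ^ j) ^+ k *+ 'C(r j, k))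
    (r_lt_rmaxS j)).
  rewrite big_mkcond; apply: eq_bigr => k _; rewrite -exprM mulnC.
  by case: ltnP => // /bin_small->; rewrite mulr0n.
rewrite /binsum natr_sum (eq_bigr _ (fun j _ => expandE j)) bigA_distr_bigA.
rewrite raddf_sum big_mkcond; apply: eq_bigr => k _.
rewrite prodrMn prodrXr raddfMn /= coefs_modXn /pval (modn_small lt_i_m).
case: (boolP [forall j, _]) => [_ | /forallPn[j]]; last first.
  rewrite -ltnNge => /bin_small Cj0 /=.
  by rewrite [\prod_(_ < _) _](bigD1 j) //= Cj0 mul0r mulr0n.
by case: eqP; rewrite ?mul0rn // natr_prod mul1rn.
Qed.

Lemma prime_dvd_bin_expn p f n : prime p -> (0 < n < p ^ f)%N -> (p %| 'C(p ^ f, n))%N.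
Proof.
move=> p_pr /andP[n_gt0 lt_n_q]; apply: contraT => not_p_dvd.
have q_coprime : coprime (p ^ f) 'C(p ^ f, n) by rewrite coprimeXl ?prime_coprime.
have : (p ^ f %| n * 'C(p ^ f, n))%N.
  by rewrite -(prednK n_gt0) -mul_bin_diag dvdn_mulr.
by rewrite Gauss_dvdl // => /(dvdn_leq n_gt0); rewrite leqNgt lt_n_q.
Qed.

Lemma bin_predXn_pchar (R : nzRingType) p f i : p \in [pchar R] ->
  (i <= (p ^ f).-1)%N -> 'C((p ^ f).-1, i)%:R = (-1) ^+ i :> R.
Proof.
move=> charRp; have p_pr := pcharf_prime charRp.
have q_gt0 : (0 < p ^ f)%N by rewrite expn_gt0 prime_gt0.
elim: i => [|i IHi] lt_i_m; first by rewrite bin0.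
have p_dvd_C : (p %| 'C(p ^ f, i.+1))%N.
  by apply: prime_dvd_bin_expn p_pr _; rewrite ltn0Sn; lia.
move: p_dvd_C; rewrite -[in 'C(p ^ f, _)](prednK q_gt0) binS (dvdn_pcharf charRp).
by rewrite natrD IHi ?(ltnW lt_i_m) // addr_eq0 exprS mulN1r => /eqP.
Qed.

Lemma XnD1_pchar (R : comNzRingType) p n : p \in [pchar R] ->
  ('X^(p ^ n) + 1 : {poly R}) = ('X + 1) ^+ (p ^ n).
Proof.
move=> charRp; rewrite exprDn_pchar ?expr1n //.
by rewrite (eq_pnat _ (pchar_poly R)) (eq_pnat _ (pcharf_eq charRp)) pnatX pnat_id
  ?(pcharf_prime charRp).
Qed.

Section Periodicity.
Variables (F : fieldType) (p f : nat).
Hypothesis charFp : p \in [pchar F].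
Let m := (p ^ f).-1.

Lemma dvdp_XD1_period n k : (0 < n)%N ->
  ('X^m - 1 : {poly F}) %| ('X + 1) ^+ (n + k * m) - ('X + 1) ^+ n.
Proof.
have q_gt0 : (0 < p ^ f)%N by rewrite expn_gt0 prime_gt0 ?(pcharf_prime charFp).
have qE : (p ^ f = m.+1)%N by rewrite /m prednK.
set Y := ('X + 1 : {poly F}).
have Yq : Y ^+ m.+1 = 'X * 'X^m + 1 by rewrite -qE -XnD1_pchar // qE exprS.
have period1 N : ('X^m - 1) %| Y ^+ (N.+1 + m) - Y ^+ N.+1.
  rewrite addSnnS exprD Yq exprS; move: (Y ^+ N) ('X^m : {poly F}) => A Z.
  have -> : A * ('X * Z + 1) - Y * A = A * 'X * (Z - 1) by rewrite /Y; ring.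
  exact: dvdp_mull.
case: n => [//|n] _; elim: k => [|k IHk]; first by rewrite addn0 subrr dvdp0.
have -> : (n.+1 + k.+1 * m = (n + k * m).+1 + m)%N.
  by rewrite mulSn [(m + _)%N]addnC addnA !addSn.
by rewrite -[X in _ %| X](subrKA (Y ^+ (n + k * m).+1)) dvdp_add.
Qed.

End Periodicity.

Lemma coefs_mod_prod_XnD1_pchar (F : fieldType) p f (r : 'I_f -> nat) i :
  p \in [pchar F] -> (0 < pval p r)%N -> ((p ^ f).-1 %| pval p r)%N ->
  (i < (p ^ f).-1)%N ->
  coefs_mod (p ^ f).-1 i (\prod_(j < f) ('X^(p ^ j) + 1) ^+ r j : {poly F}) =
    'C((p ^ f).-1, i)%:R + (i == 0)%N%:R.
Proof.
move=> charFp r_gt0 m_dvd_r lt_i_m; set m := (p ^ f).-1.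
have m_gt0 : (0 < m)%N := leq_ltn_trans (leq0n i) lt_i_m.
have prodE : \prod_(j < f) ('X^(p ^ j) + 1 : {poly F}) ^+ r j = ('X + 1) ^+ pval p r.
  rewrite /pval -prodrXr; apply: eq_bigr => j _.
  by rewrite XnD1_pchar // -exprM mulnC.
have [k rE] : exists k, pval p r = (m + k * m)%N.
  exists (pval p r %/ m).-1; rewrite -mulSn prednK ?divnK //.
  by rewrite divn_gt0 // dvdn_leq.
rewrite prodE rE (@eq_coefs_mod_dvdp _ _ _ _ (('X + 1) ^+ m)) ?dvdp_XD1_period //.
exact: coefs_mod_XD1_expn.
Qed.

Lemma eqz_mod_pchar (R : nzRingType) p (b : nat) (z : int) : p \in [pchar R] ->
  b%:R = z%:~R :> R -> (b%:Z = z %[mod p%:Z])%Z.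
Proof.
move=> charRp bz; apply/eqP.
by rewrite eqz_mod_dvd (dvdz_pcharf charRp) rmorphB /= -bz subrr.
Qed.

Theorem lemma1 (p f : nat) (r : 'I_f -> nat) (i : nat) :
  prime p -> (1 <= f)%N ->
  (0 < pval p r)%N -> ((p ^ f).-1 %| pval p r)%N ->
  (i < (p ^ f).-1)%N ->
  ((0 < i)%N -> ((binsum p r i)%:Z = (-1) ^+ i %[mod (p%:Z)])%Z) /\
  (i = 0%N -> ((binsum p r i)%:Z = 2 %[mod (p%:Z)])%Z).
Proof.
(* f >= 1 is implied by i < q - 1. *)
move=> p_pr _ r_gt0 m_dvd_r lt_i_m; have charFp := pchar_Fp p_pr.
have binsumE : (binsum p r i)%:R = 'C((p ^ f).-1, i)%:R + (i == 0)%N%:R :> 'F_p.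
  by rewrite binsum_coefs_mod // coefs_mod_prod_XnD1_pchar.
split=> [i_gt0 | i0]; apply: (eqz_mod_pchar charFp); rewrite binsumE.
  by rewrite bin_predXn_pchar ?(ltnW lt_i_m) // (gtn_eqF i_gt0) addr0 rmorphXn rmorphN1.
by rewrite i0 bin0.
Qed.
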